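(* Let $\mathcal{A}$ be a generalized convex set of density operators on a finite-dimensional Hilbert space, let $\rho,\sigma,\tau,\omega\in\mathcal{A}$ and $t\in[0,1]$. If $\alpha>1$, then $$\hat{D}_{\alpha}(M^{t}_{\rho,\sigma}\|M^{t}_{\tau,\omega})\le t\,\hat{D}_{\alpha}(\rho\|\tau)+(1-t)\,\hat{D}_{\alpha}(\sigma\|\omega)+\frac{\alpha}{1-\alpha}\log\operatorname{Tr}(\rho^{t}\sigma^{1-t})+\log\operatorname{Tr}(\tau^{t}\omega^{1-t}),$$ and if $0<\alpha<1$ the reverse inequality holds.
   Context: A density operator is a positive semidefinite operator of unit trace. The Petz–Rényi $\alpha$-relative entropy, for $\alpha>0$, $\alpha\ne1$, is $\hat{D}_{\alpha}(\rho\|\sigma)=\frac{1}{\alpha-1}\log\operatorname{Tr}(\rho^{\alpha}\sigma^{1-\alpha})$. For density operators $\rho,\sigma$ and $t\in[0,1]$, $M^{t}_{\rho,\sigma}=\rho^{t}\sigma^{1-t}/\operatorname{Tr}(\rho^{t}\sigma^{1-t})$. A set $\mathcal{A}$ of density operators is called generalized convex if for all $\rho,\sigma\in\mathcal{A}$ and all $t\in[0,1]$, $M^{t}_{\rho,\sigma}$ is a density operator belonging to $\mathcal{A}$. *)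

From HB Require Import structures.
From mathcomp Require Import all_boot all_order all_algebra.
From mathcomp Require Import sesquilinear spectral.
From mathcomp Require Import complex.
From mathcomp Require Import all_classical all_reals.
From mathcomp Require Import exp.
Set Implicit Arguments.
Unset Strict Implicit.
Unset Printing Implicit Defensive.
Import Order.TTheory GRing.Theory Num.Theory Num.Def.
Local Open Scope ring_scope.
Local Open Scope complex_scope.

Section Quantum.
Variables (R : realType) (n : nat).
Local Notation C := (R[i]).
Local Notation M := ('M[C]_n).

Definition adjmx (X : M) : M := (map_mx conjC X)^T.

Definition psd (X : M) : Prop :=
  X \is hermsymmx /\ forall v : 'rV[C]_n, 0 <= (v *m X *m (map_mx conjC v)^T) 0 0.

Definition density (X : M) : Prop := psd X /\ \tr X = 1.

(* real power X^s of a PSD matrix via its spectral decomposition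
   X = P^-1 diag(l) P; eigenvalue l is sent to l `^ s (powR convention:
   0 `^ 0 = 1, 0 `^ s = 0 for s <> 0, i.e. negative powers are taken on
   the support). *)
Definition mxpowR (X : M) (s : R) : M :=
  invmx (spectralmx X) *m
  diag_mx (map_mx (fun z : C => (powR (complex.Re z) s)%:C) (spectral_diag X))
  *m spectralmx X.

Definition Mt (t : R) (rho sigma : M) : M :=
  (\tr (mxpowR rho t *m mxpowR sigma (1 - t)))^-1 *:
    (mxpowR rho t *m mxpowR sigma (1 - t)).

Definition gen_convex (A : M -> Prop) : Prop :=
  forall rho sigma, A rho -> A sigma -> forall t : R, 0 <= t <= 1 ->
    density (Mt t rho sigma) /\ A (Mt t rho sigma).

Definition eln (x : R) : \bar R := if 0 < x then (ln x)%:E else -oo%E.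

Definition petz (alpha : R) (rho sigma : M) : \bar R :=
  if (1 < alpha) && ~~ (rho <= sigma)%MS then +oo%E
  else (((alpha - 1)^-1)%:E *
       eln (complex.Re (\tr (mxpowR rho alpha *m mxpowR sigma (1 - alpha)))))%E.

End Quantum.

From HB Require Import structures.
From mathcomp Require Import all_boot all_order all_algebra.
From mathcomp Require Import sesquilinear spectral complex.
From mathcomp Require Import all_classical all_reals exp.
From mathcomp Require Import lra ring.
Import Order.TTheory GRing.Theory Num.Theory Num.Def.
Local Open Scope ring_scope.
Local Open Scope complex_scope.
Set Implicit Arguments.
Unset Strict Implicit.
Unset Printing Implicit Defensive.

(* Generalized convexity at t = 1/2 makes rho^(1/2) sigma^(1/2), divided by
   its trace, Hermitian; its trace is then real, so the two square roots
   commute, and so do any two elements of A.  Commuting Hermitian matrices are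
   simultaneously diagonalizable, and in a common eigenbasis everything in the
   statement is classical: M^t_{r,s} has eigenvalues r_j^t s_j^(1-t) / Z with
   Z = sum_j r_j^t s_j^(1-t), and Tr(X^a Y^(1-a)) = Q_a(x, y) =
   sum_j x_j^a y_j^(1-a).  Rescaling by Z only shifts the divergence by
   a/(1-a) log Z_1 + log Z_2, and Hoelder's inequality gives
   Q_a(r^t s^(1-t), u^t w^(1-t)) <= Q_a(r, u)^t Q_a(s, w)^(1-t); taking
   logarithms and multiplying by 1/(a-1) gives the claim, in a direction fixed
   by the sign of a - 1. *)

Section ClassicalRenyi.
Variables (R : realType) (n : nat).
Implicit Types (x y r s u w : 'I_n -> R) (a t al : R).

(* Diagonal counterparts of [mxpowR X t *m mxpowR Y (1 - t)], of
   Tr(X^a Y^(1-a)), of [Mt] and of [petz], for X, Y diagonal in a common basis. *)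
Definition geomean t x y (j : 'I_n) : R := x j `^ t * y j `^ (1 - t).

Definition renyi_sum a x y : R := \sum_j geomean a x y j.

Definition cMt t x y (j : 'I_n) : R := (renyi_sum t x y)^-1 * geomean t x y j.

Definition supp_sub x y : bool := [forall j, (x j != 0) ==> (y j != 0)].

Definition cpetz al x y : \bar R :=
  if (1 < al) && ~~ supp_sub x y then +oo%E
  else (((al - 1)^-1)%:E * eln (renyi_sum al x y))%E.

Lemma geomean_ge0 t x y j : 0 <= geomean t x y j.
Proof. by rewrite mulr_ge0 ?powR_ge0. Qed.

Lemma renyi_sum_ge0 a x y : 0 <= renyi_sum a x y.
Proof. by apply: sumr_ge0 => j _; apply: geomean_ge0. Qed.

(* Uses the convention [0 `^ 0 = 1]. *)
Lemma geomean0 x y : (forall j, 0 <= y j) -> geomean 0 x y = y.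
Proof. by move=> y0; apply/funext => j; rewrite /geomean powRr0 subr0 powRr1 ?mul1r. Qed.

Lemma geomean1 x y : (forall j, 0 <= x j) -> geomean 1 x y = x.
Proof. by move=> x0; apply/funext => j; rewrite /geomean subrr powRr0 powRr1 ?mulr1. Qed.

Lemma geomean_exchange al t r s u w j :
  0 <= r j -> 0 <= s j -> 0 <= u j -> 0 <= w j ->
  geomean al (geomean t r s) (geomean t u w) j
  = geomean t (geomean al r u) (geomean al s w) j.
Proof.
move=> r0 s0 u0 w0; rewrite /geomean.
rewrite (powRM al (powR_ge0 (r j) t) (powR_ge0 (s j) (1 - t))).
rewrite (powRM (1 - al) (powR_ge0 (u j) t) (powR_ge0 (w j) (1 - t))).
rewrite (powRM t (powR_ge0 (r j) al) (powR_ge0 (u j) (1 - al))).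
rewrite (powRM (1 - t) (powR_ge0 (s j) al) (powR_ge0 (w j) (1 - al))).
rewrite -!powRrM (mulrC al t) (mulrC al (1 - t)) (mulrC (1 - al) t).
by rewrite (mulrC (1 - al) (1 - t)); ring.
Qed.

(* Young's inequality with exponents 1/t and 1/(1-t). *)
Lemma powR_amgm a b t : 0 <= a -> 0 <= b -> 0 < t < 1 ->
  a `^ t * b `^ (1 - t) <= t * a + (1 - t) * b.
Proof.
move=> a0 b0 /andP[t0 t1]; have t'0 : 0 < 1 - t by rewrite subr_gt0.
have := @conjugate_powR R (a `^ t) (b `^ (1 - t)) t^-1 (1 - t)^-1
  (powR_ge0 _ _) (powR_ge0 _ _).
rewrite !invr_gt0 t0 t'0 !invrK -!powRrM !mulfV ?gt_eqF // !powRr1 //.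
by rewrite [t * a]mulrC [(1 - t) * b]mulrC; apply; lra.
Qed.

Lemma hoelder_renyi_sum t x y : (forall j, 0 <= x j) -> (forall j, 0 <= y j) ->
  0 < t < 1 -> renyi_sum t x y <= (\sum_j x j) `^ t * (\sum_j y j) `^ (1 - t).
Proof.
move=> x0 y0 t01; have /andP[t0 t1] := t01.
set X := \sum_j x j; set Y := \sum_j y j.
have X0 : 0 <= X by apply: sumr_ge0.
have Y0 : 0 <= Y by apply: sumr_ge0.
have [Xz|Xnz] := eqVneq X 0.
  rewrite /renyi_sum big1 ?mulr_ge0 ?powR_ge0 // => j _.
  by rewrite /geomean (psumr_eq0P (fun j _ => x0 j) Xz) // powR0 ?gt_eqF ?mul0r.
have [Yz|Ynz] := eqVneq Y 0.
  rewrite /renyi_sum big1 ?mulr_ge0 ?powR_ge0 // => j _.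
  rewrite /geomean (psumr_eq0P (fun j _ => y0 j) Yz) // powR0 ?mulr0 //.
  by rewrite subr_eq0 gt_eqF.
have Xp : 0 < X by rewrite lt_def Xnz.
have Yp : 0 < Y by rewrite lt_def Ynz.
have split_norm j : geomean t x y j
    = X `^ t * Y `^ (1 - t) * geomean t (fun j => x j / X) (fun j => y j / Y) j.
  rewrite /geomean -{1}(divfK Xnz (x j)) -{1}(divfK Ynz (y j)).
  by rewrite !powRM ?divr_ge0 ?invr_ge0 //; ring.
rewrite /renyi_sum (eq_bigr _ (fun j _ => split_norm j)) -mulr_sumr.
apply: ler_piMr; first by rewrite mulr_ge0 ?powR_ge0.
apply: le_trans (_ : \sum_j (t * (x j / X) + (1 - t) * (y j / Y)) <= 1).
  by apply: ler_sum => j _; apply: powR_amgm; rewrite ?divr_ge0 ?x0 ?y0.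
by rewrite big_split /= -!mulr_sumr -!mulr_suml -/X -/Y !mulfV //; lra.
Qed.

Lemma renyi_sum_geomean_le al t r s u w :
  (forall j, 0 <= r j) -> (forall j, 0 <= s j) ->
  (forall j, 0 <= u j) -> (forall j, 0 <= w j) -> 0 < t < 1 ->
  renyi_sum al (geomean t r s) (geomean t u w)
  <= renyi_sum al r u `^ t * renyi_sum al s w `^ (1 - t).
Proof.
move=> r0 s0 u0 w0 t01.
have exch j := geomean_exchange al t (r0 j) (s0 j) (u0 j) (w0 j).
rewrite /renyi_sum (eq_bigr _ (fun j _ => exch j)).
by apply: hoelder_renyi_sum => // j; apply: geomean_ge0.
Qed.

Lemma supp_sub_geomean t r s u w : 0 < t < 1 ->
  supp_sub r u -> supp_sub s w -> supp_sub (geomean t r s) (geomean t u w).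
Proof.
move=> /andP[t0 t1] /forallP ru /forallP sw; apply/forallP => j; apply/implyP.
have t'0 : 1 - t != 0 by rewrite subr_eq0 gt_eqF.
rewrite /geomean !mulf_eq0 !powR_eq0 (gt_eqF t0) t'0 !andbT !negb_or.
by case/andP=> /(implyP (ru j)) -> /(implyP (sw j)) ->.
Qed.

Lemma gt0_eln (z : R) : 0 < z -> eln z = (ln z)%:E.
Proof. by move=> z0; rewrite /eln z0. Qed.

Lemma le0_eln (z : R) : z <= 0 -> eln z = -oo%E.
Proof. by move=> z0; rewrite /eln ltNge z0. Qed.

Lemma eln_mull (c z : R) : 0 < c -> eln (c * z) = (eln z + (ln c)%:E)%E.
Proof.
move=> c0; rewrite /eln pmulr_rgt0 //; case: ifP => // z0.
by rewrite lnM ?posrE // addrC.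
Qed.

Lemma eln_le_geomean (S X Y : R) t : 0 < t < 1 -> 0 <= X -> 0 <= Y ->
  S <= X `^ t * Y `^ (1 - t) -> (eln S <= t%:E * eln X + (1 - t)%:E * eln Y)%E.
Proof.
move=> /andP[t0 t1] X0 Y0 SXY.
have [S0|Sp] := leP S 0; first by rewrite le0_eln ?leNye.
have XYp := lt_le_trans Sp SXY.
have Xp : 0 < X.
  rewrite lt_def X0 andbT; apply: contraTneq XYp => ->.
  by rewrite powR0 ?mul0r ?ltxx // gt_eqF.
have Yp : 0 < Y.
  rewrite lt_def Y0 andbT; apply: contraTneq XYp => ->.
  by rewrite powR0 ?mulr0 ?ltxx // subr_eq0 gt_eqF.
rewrite !gt0_eln // -!EFinM -EFinD lee_fin -!ln_powR -lnM ?posrE ?powR_gt0 //.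
by rewrite ler_ln ?posrE ?mulr_gt0 ?powR_gt0.
Qed.

Lemma mule_eln_comb (k a b X Y : R) : 0 <= a -> 0 <= b ->
  (a%:E * (k%:E * eln X) + b%:E * (k%:E * eln Y)
   = k%:E * (a%:E * eln X + b%:E * eln Y))%E.
Proof.
have neqy (c Z : R) : 0 <= c -> (c%:E * eln Z != +oo)%E.
  move=> c0; rewrite /eln; case: ifP => _; first by rewrite -EFinM.
  have [->|cn0] := eqVneq c 0; first by rewrite mul0e.
  by rewrite gt0_muleNy // lte_fin lt_def cn0.
move=> a0 b0; rewrite (muleCA a%:E) (muleCA b%:E) muleDr //.
by rewrite /adde_def !negb_and (negPf (neqy _ X a0)) (negPf (neqy _ Y b0)) !orbT.
Qed.

Lemma convex_combe_pinfty (A B : \bar R) t : 0 < t < 1 ->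
  A != -oo%E -> B != -oo%E -> A = +oo%E \/ B = +oo%E ->
  (t%:E * A + (1 - t)%:E * B = +oo)%E.
Proof.
move=> /andP[t0 t1] An Bn.
have t'0 : 0 < 1 - t by rewrite subr_gt0.
have mule_neqNy (c : R) (e : \bar R) : 0 < c -> e != -oo%E -> (c%:E * e != -oo)%E.
  move=> c0; case: e => [e _|_|//]; first by rewrite -EFinM.
  by rewrite gt0_muley ?lte_fin.
case=> ->; rewrite gt0_muley ?lte_fin //.
- by rewrite addye // mule_neqNy.
- by rewrite addey // mule_neqNy.
Qed.

Lemma cpetz_neqNy al x y : 1 < al ->
  (forall j, 0 <= x j) -> (forall j, 0 <= y j) -> \sum_j x j = 1 ->
  cpetz al x y != -oo%E.
Proof.
move=> al1 x0 y0 x1; rewrite /cpetz al1 /=; case: ifPn => // /negPn/forallP supp.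
have : \sum_j x j <> 0 by rewrite x1 => /eqP; rewrite oner_eq0.
move=> /(psumr_neq0P (fun j _ => x0 j)) [j /andP[_ xj]].
have yj : 0 < y j by rewrite lt_def (implyP (supp j)) ?gt_eqF ?y0.
have rp : 0 < renyi_sum al x y.
  rewrite lt_def renyi_sum_ge0 andbT psumr_neq0 => [|i _]; last exact: geomean_ge0.
  by apply/hasP; exists j; rewrite ?mem_index_enum // mulr_gt0 ?powR_gt0.
by rewrite gt0_eln // -EFinM.
Qed.

Lemma cpetz_geomean_gt1 al t r s u w : 1 < al ->
  (forall j, 0 <= r j) -> (forall j, 0 <= s j) ->
  (forall j, 0 <= u j) -> (forall j, 0 <= w j) ->
  \sum_j r j = 1 -> \sum_j s j = 1 -> 0 <= t <= 1 ->
  (cpetz al (geomean t r s) (geomean t u w)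
   <= t%:E * cpetz al r u + (1 - t)%:E * cpetz al s w)%E.
Proof.
move=> al1 r0 s0 u0 w0 r1 s1 /andP[t0 t1].
have [->|tn0] := eqVneq t 0; first by rewrite !geomean0 // mul0e add0e subr0 mul1e.
have [->|tn1] := eqVneq t 1; first by rewrite !geomean1 // subrr mul0e adde0 mul1e.
have t01 : 0 < t < 1 by rewrite !lt_neqAle t0 t1 eq_sym tn0 tn1.
have [ru|nru] := boolP (supp_sub r u); last first.
  by rewrite convex_combe_pinfty ?leey ?cpetz_neqNy //; left; rewrite /cpetz al1 nru.
have [sw|nsw] := boolP (supp_sub s w); last first.
  by rewrite convex_combe_pinfty ?leey ?cpetz_neqNy //; right; rewrite /cpetz al1 nsw.
rewrite /cpetz al1 supp_sub_geomean // ru sw /= mule_eln_comb ?subr_ge0 //.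
apply: lee_wpmul2l; first by rewrite lee_fin invr_ge0 subr_ge0 ltW.
by apply: eln_le_geomean; rewrite ?renyi_sum_ge0 ?renyi_sum_geomean_le.
Qed.

Lemma cpetz_geomean_lt1 al t r s u w : al < 1 ->
  (forall j, 0 <= r j) -> (forall j, 0 <= s j) ->
  (forall j, 0 <= u j) -> (forall j, 0 <= w j) -> 0 <= t <= 1 ->
  (t%:E * cpetz al r u + (1 - t)%:E * cpetz al s w
   <= cpetz al (geomean t r s) (geomean t u w))%E.
Proof.
move=> al1 r0 s0 u0 w0 /andP[t0 t1].
have [->|tn0] := eqVneq t 0; first by rewrite !geomean0 // mul0e add0e subr0 mul1e.
have [->|tn1] := eqVneq t 1; first by rewrite !geomean1 // subrr mul0e adde0 mul1e.
have t01 : 0 < t < 1 by rewrite !lt_neqAle t0 t1 eq_sym tn0 tn1.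
rewrite /cpetz ltNge (ltW al1) /= mule_eln_comb ?subr_ge0 //.
rewrite -(opprK (al - 1)^-1) EFinN !mulNe leeN2.
apply: lee_wpmul2l; first by rewrite lee_fin oppr_ge0 invr_le0 subr_le0 ltW.
by apply: eln_le_geomean; rewrite ?renyi_sum_ge0 ?renyi_sum_geomean_le.
Qed.

Lemma cpetz_scale al (c d : R) x y : al != 1 -> 0 < c -> 0 < d ->
  (forall j, 0 <= x j) -> (forall j, 0 <= y j) ->
  cpetz al (fun j => c * x j) (fun j => d * y j)
  = (cpetz al x y + ((al - 1)^-1 * (al * ln c + (1 - al) * ln d))%:E)%E.
Proof.
move=> al1 c0 d0 x0 y0.
have supp_scale : supp_sub (fun j => c * x j) (fun j => d * y j) = supp_sub x y.
  by apply: eq_forallb => j; rewrite !mulf_eq0 (gt_eqF c0) (gt_eqF d0).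
have renyi_sum_scale : renyi_sum al (fun j => c * x j) (fun j => d * y j)
                       = c `^ al * d `^ (1 - al) * renyi_sum al x y.
  rewrite /renyi_sum mulr_sumr; apply: eq_bigr => j _.
  by rewrite /geomean !powRM ?x0 ?y0 ?ltW //; ring.
rewrite /cpetz supp_scale; case: ifP => _; first by rewrite addye.
rewrite renyi_sum_scale eln_mull ?mulr_gt0 ?powR_gt0 // muleDr ?fin_num_adde_defl //.
by rewrite lnM ?posrE ?powR_gt0 // !ln_powR -EFinM.
Qed.

Lemma cpetz_cMt al t r s u w : al != 1 ->
  (forall j, 0 <= r j) -> (forall j, 0 <= s j) ->
  (forall j, 0 <= u j) -> (forall j, 0 <= w j) ->
  0 < renyi_sum t r s -> 0 < renyi_sum t u w ->
  cpetz al (cMt t r s) (cMt t u w)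
  = (cpetz al (geomean t r s) (geomean t u w)
     + (al / (1 - al) * ln (renyi_sum t r s) + ln (renyi_sum t u w))%:E)%E.
Proof.
move=> al1 r0 s0 u0 w0 Z1 Z2.
rewrite /cMt cpetz_scale ?invr_gt0 // => [|j|j]; try exact: geomean_ge0.
rewrite !lnV ?posrE //; congr (_ + _%:E)%E.
have subal1 : al - 1 != 0 by rewrite subr_eq0.
have sub1al : 1 - al != 0 by rewrite subr_eq0 eq_sym.
by field; rewrite subal1 sub1al.
Qed.

Lemma cpetz_cMt_le al t r s u w : 1 < al ->
  (forall j, 0 <= r j) -> (forall j, 0 <= s j) ->
  (forall j, 0 <= u j) -> (forall j, 0 <= w j) ->
  \sum_j r j = 1 -> \sum_j s j = 1 -> 0 <= t <= 1 ->
  0 < renyi_sum t r s -> 0 < renyi_sum t u w ->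
  (cpetz al (cMt t r s) (cMt t u w)
   <= t%:E * cpetz al r u + (1 - t)%:E * cpetz al s w
      + (al / (1 - al) * ln (renyi_sum t r s) + ln (renyi_sum t u w))%:E)%E.
Proof.
move=> al1 r0 s0 u0 w0 r1 s1 t01 Z1 Z2.
by rewrite cpetz_cMt ?gt_eqF // leeD2r // cpetz_geomean_gt1.
Qed.

Lemma cpetz_cMt_ge al t r s u w : al < 1 ->
  (forall j, 0 <= r j) -> (forall j, 0 <= s j) ->
  (forall j, 0 <= u j) -> (forall j, 0 <= w j) -> 0 <= t <= 1 ->
  0 < renyi_sum t r s -> 0 < renyi_sum t u w ->
  (t%:E * cpetz al r u + (1 - t)%:E * cpetz al s w
   + (al / (1 - al) * ln (renyi_sum t r s) + ln (renyi_sum t u w))%:E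
   <= cpetz al (cMt t r s) (cMt t u w))%E.
Proof.
move=> al1 r0 s0 u0 w0 t01 Z1 Z2.
by rewrite cpetz_cMt ?lt_eqF // leeD2r // cpetz_geomean_lt1.
Qed.

End ClassicalRenyi.

Section DiagConj.
Variables (F : fieldType) (n : nat).
Implicit Types (P U : 'M[F]_n) (a b d l : 'rV[F]_n).

Definition diag_conj U d : 'M[F]_n := invmx U *m diag_mx d *m U.

Lemma diag_conj_entry P U l d : P \in unitmx -> U \in unitmx ->
  diag_conj P l = diag_conj U d ->
  forall i j, (P *m invmx U) i j != 0 -> l 0 i = d 0 j.
Proof.
move=> Pu Uu E i j Wij.
have intertwine : diag_mx l *m (P *m invmx U) = P *m invmx U *m diag_mx d.
  have := congr1 (fun X => P *m X *m invmx U) E; rewrite /diag_conj /=.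
  by rewrite !mulmxA mulmxV // mul1mx mulmxK // => ->.
move: Wij intertwine; set W := P *m invmx U; clearbody W => Wij /matrixP /(_ i j).
rewrite mul_diag_mx mul_mx_diag !mxE => lWd.
by apply: (mulIf Wij); rewrite lWd mulrC.
Qed.

Lemma diag_conj_map (f : F -> F) P U l d : P \in unitmx -> U \in unitmx ->
  diag_conj P l = diag_conj U d ->
  diag_conj P (map_mx f l) = diag_conj U (map_mx f d).
Proof.
move=> Pu Uu E; have [W WE] : {W | W = P *m invmx U} by exists (P *m invmx U).
have fW : diag_mx (map_mx f l) *m W = W *m diag_mx (map_mx f d).
  apply/matrixP => i j; rewrite mul_diag_mx mul_mx_diag !mxE.
  have [->|Wij] := eqVneq (W i j) 0; first by rewrite mulr0 mul0r.
  by rewrite WE in Wij; rewrite (diag_conj_entry Pu Uu E Wij) mulrC.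
have PW : P = W *m U by rewrite WE mulmxKV.
rewrite /diag_conj {2}PW mulmxA -(mulmxA _ _ W) fW !mulmxA WE mulmxA.
by rewrite mulVmx // mul1mx.
Qed.

Lemma diag_conj_eigen P U l d : P \in unitmx -> U \in unitmx ->
  diag_conj P l = diag_conj U d -> forall j, exists i, d 0 j = l 0 i.
Proof.
move=> Pu Uu E j.
have [i Wij] : exists i, (P *m invmx U) i j != 0.
  have Wu : P *m invmx U \in unitmx by rewrite unitmx_mul Pu unitmx_inv.
  move: Wu; set W := P *m invmx U; clearbody W => Wu.
  apply/existsP; apply: contraT; rewrite negb_exists => /forallP W0.
  have /matrixP /(_ j j) := mulVmx Wu; rewrite !mxE eqxx big1 => [/eqP|k _].
    by rewrite eq_sym oner_eq0.
  by rewrite (eqP (negPn (W0 k))) mulr0.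
by exists i; rewrite (diag_conj_entry Pu Uu E Wij).
Qed.

Lemma diag_conjM U a b : U \in unitmx ->
  diag_conj U a *m diag_conj U b = diag_conj U (\row_j (a 0 j * b 0 j)).
Proof.
by move=> Uu; rewrite /diag_conj -mulmx_diag !mulmxA (mulmxK Uu).
Qed.

Lemma mxtrace_diag_conj U d : U \in unitmx -> \tr (diag_conj U d) = \sum_j d 0 j.
Proof.
by move=> Uu; rewrite /diag_conj mxtrace_mulC mulmxA (mulmxV Uu) mul1mx mxtrace_diag.
Qed.

Lemma scale_diag_conj U c d : c *: diag_conj U d = diag_conj U (c *: d).
Proof.
rewrite /diag_conj scalemxAl scalemxAr; congr (_ *m _ *m _).
by apply/matrixP => i j; rewrite !mxE mulrnAr.
Qed.

Lemma diag_conj_submx U a b : U \in unitmx ->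
  (diag_conj U a <= diag_conj U b)%MS = [forall j, (a 0 j != 0) ==> (b 0 j != 0)].
Proof.
move=> Uu; apply/idP/forallP.
  case/submxP => D E j; apply/implyP; apply: contraNN => /eqP bj.
  have := congr1 (fun X => U *m X *m invmx U) E; rewrite /diag_conj /=.
  rewrite !mulmxA (mulmxV Uu) mul1mx !(mulmxK Uu) => /matrixP /(_ j j).
  by rewrite mul_mx_diag !mxE eqxx !mulr1n bj mulr0 => ->.
move=> ab; apply/submxP; exists (diag_conj U (\row_j (a 0 j / b 0 j))).
rewrite diag_conjM //; congr diag_conj; apply/matrixP => i j; rewrite !mxE (ord1 i).
have [bj|bj] := eqVneq (b 0 j) 0; last by rewrite divfK.
by have := ab j; rewrite bj eqxx implybF negbK => /eqP ->; rewrite mulr0.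
Qed.

End DiagConj.

Section Hermitian.
Variables (C : numClosedFieldType) (n : nat).
Local Notation M := 'M[C]_n.
Local Open Scope sesquilinear_scope.

Lemma hermitian_adj (X : M) : X \is hermsymmx -> X^t* = X.
Proof. by move/is_hermitianmxP; rewrite expr0 scale1r. Qed.

Lemma hermitian_spectral (X : M) : X \is hermsymmx ->
  X = diag_conj (spectralmx X) (spectral_diag X).
Proof. by move/hermitian_normalmx/orthomx_spectralP. Qed.

Lemma diag_conj_adj (P : M) d : P \is unitarymx ->
  (diag_conj P d)^t* = diag_conj P (map_mx conjC d).
Proof.
move=> Pu; rewrite /diag_conj invmx_unitary // !trmx_mul !map_mxM trmxCK.
by rewrite tr_diag_mx map_diag_mx mulmxA.
Qed.

Lemma hermitian_codiag (As : seq M) :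
  {in As, forall A, A \is hermsymmx} -> {in As &, forall A B, comm_mx A B} ->
  exists2 U : M, U \in unitmx & {in As, forall A, exists d, A = diag_conj U d}.
Proof.
move=> Ah Ac; have [U Uu /allP UAs] : codiagonalizable As.
  apply/codiagonalizableP; split => // A AAs.
  exists (spectralmx A); first exact: spectral_unit.
  apply/(similar_diagLR (spectral_unit A)); exists (spectral_diag A).
  by rewrite conjVmx ?spectral_unit //; apply: hermitian_spectral; apply: Ah.
exists U => // A AAs; have /(similar_diagLR Uu) [d ->] := UAs A AAs.
by exists d; rewrite conjVmx.
Qed.

(* The trace of a Hermitian matrix is real, so H K = (H K)^* = K H. *)
Lemma hermitian_normalized_mul_comm (H K : M) : H^t* = H -> K^t* = K ->
  (\tr (H *m K))^-1 *: (H *m K) \is hermsymmx ->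
  \tr ((\tr (H *m K))^-1 *: (H *m K)) = 1 -> H *m K = K *m H.
Proof.
move=> Hh Kh /hermitian_adj; rewrite mxtraceZ; set T := \tr (H *m K) => NT NT1.
have Ti0 : T^-1 != 0.
  by apply/eqP => T0; move: NT1; rewrite T0 mul0r => /eqP; rewrite eq_sym oner_eq0.
have E : T^-1 *: (H *m K) = conjC (T^-1) *: (K *m H).
  by rewrite -{1}NT linearZ /= map_mxZ trmx_mul map_mxM Hh Kh.
have cT : conjC (T^-1) = T^-1.
  have := congr1 mxtrace E; rewrite !mxtraceZ (mxtrace_mulC K H) -/T.
  have T0 : T != 0 by apply: contraNneq Ti0 => ->; rewrite invr0.
  by move=> E'; apply: (mulIf T0); rewrite -E'.
by apply: (scalerI Ti0); rewrite E cT.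
Qed.

End Hermitian.

Section PsdPowers.
Variables (R : realType) (n : nat).
Local Notation C := R[i].
Local Notation M := 'M[C]_n.
Local Open Scope sesquilinear_scope.

Definition realrow (x : 'I_n -> R) : 'rV[C]_n := \row_j (x j)%:C.

Lemma ge0_complex (z : C) : 0 <= z -> z = (complex.Re z)%:C /\ 0 <= complex.Re z.
Proof. by case: z => a b; rewrite lecE /= => /andP[/eqP -> a0]. Qed.

Lemma conjC_real (x : R) : conjC (x%:C : C) = x%:C.
Proof. by apply/eqP; rewrite eq_complex /= oppr0 !eqxx. Qed.

Lemma psd_spectral_diag_ge0 (X : M) i : psd X -> 0 <= spectral_diag X 0 i.
Proof.
move=> [Xh Xq]; have XE := hermitian_spectral Xh.
set P := spectralmx X in XE; set l := spectral_diag X in XE *.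
have Pu : P \is unitarymx by exact: spectral_unitarymx.
have PXP : P *m X *m P^t* = diag_mx l.
  by rewrite XE /diag_conj (invmx_unitary Pu) !mulmxA (unitarymxP Pu) mul1mx mulmxtVK.
have := Xq (row i P).
have -> : (row i P *m X *m (map_mx conjC (row i P))^T) 0 0 = (P *m X *m P^t*) i i.
  by rewrite -row_mul !mxE; apply: eq_bigr => k _; rewrite !mxE.
by rewrite PXP mxE eqxx mulr1n.
Qed.

Lemma psd_diag_conj (X U : M) d : psd X -> U \in unitmx -> X = diag_conj U d ->
  exists2 x : 'I_n -> R, (forall j, 0 <= x j) & d = realrow x.
Proof.
move=> Xp Uu XE; have XP := etrans (esym (hermitian_spectral Xp.1)) XE.
have d0 j : 0 <= d 0 j.
  by have [i ->] := diag_conj_eigen (spectral_unit X) Uu XP j; apply: psd_spectral_diag_ge0.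
exists (fun j => complex.Re (d 0 j)) => [j|]; first exact: (ge0_complex (d0 j)).2.
by apply/matrixP => i j; rewrite !mxE (ord1 i) -(ge0_complex (d0 j)).1.
Qed.

Lemma psd_codiag (As : seq M) :
  {in As, forall A, psd A} -> {in As &, forall A B, comm_mx A B} ->
  exists2 U : M, U \in unitmx & {in As, forall A,
    exists2 x : 'I_n -> R, (forall j, 0 <= x j) & A = diag_conj U (realrow x)}.
Proof.
move=> Apsd Ac; have [U Uu Ud] := hermitian_codiag (fun A AAs => (Apsd A AAs).1) Ac.
exists U => // A AAs; have [d Ed] := Ud A AAs.
have [x x0 dx] := psd_diag_conj (Apsd A AAs) Uu Ed.
by exists x; [exact: x0 | rewrite -dx; exact: Ed].
Qed.

Lemma mxpowRE (X : M) s : mxpowR X s =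
  diag_conj (spectralmx X) (map_mx (fun z : C => (complex.Re z `^ s)%:C) (spectral_diag X)).
Proof. reflexivity. Qed.

Lemma mxpowR_adj (X : M) s : (mxpowR X s)^t* = mxpowR X s.
Proof.
rewrite !mxpowRE diag_conj_adj; last exact: spectral_unitarymx.
by congr diag_conj; apply/matrixP => i j; rewrite !mxE conjC_real.
Qed.

Lemma mxpowR_half_mul (X : M) : psd X -> mxpowR X 2^-1 *m mxpowR X 2^-1 = X.
Proof.
move=> Xp; rewrite !mxpowRE diag_conjM; last exact: spectral_unit.
rewrite [RHS](hermitian_spectral Xp.1).
congr diag_conj; apply/matrixP => i j; rewrite !mxE (ord1 i).
have [lE l0] := ge0_complex (psd_spectral_diag_ge0 j Xp).
rewrite [RHS]lE -rmorphM -powRD; last by apply/implyP => /eqP; lra.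
by rewrite (_ : 2^-1 + 2^-1 = 1 :> R) ?powRr1 //; lra.
Qed.

Lemma density_Mt_half_comm (X Y : M) : psd X -> psd Y ->
  density (Mt 2^-1 X Y) -> X *m Y = Y *m X.
Proof.
move=> Xp Yp [[Mh _] Mtr].
have half : 1 - 2^-1 = 2^-1 :> R by lra.
rewrite /Mt half in Mh Mtr.
have E := hermitian_normalized_mul_comm (mxpowR_adj X 2^-1) (mxpowR_adj Y 2^-1) Mh Mtr.
have E2 := comm_mx_sym (comm_mxM E E).
rewrite -(mxpowR_half_mul Xp) -(mxpowR_half_mul Yp).
exact: comm_mx_sym (comm_mxM E2 E2).
Qed.

Lemma gen_convex_comm (A : M -> Prop) (X Y : M) :
  (forall Z, A Z -> density Z) -> gen_convex A -> A X -> A Y -> comm_mx X Y.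
Proof.
move=> dA cA AX AY; apply: density_Mt_half_comm (dA _ AX).1 (dA _ AY).1 _.
have half01 : 0 <= (2^-1 : R) <= 1 by apply/andP; split; lra.
exact: (cA _ _ AX AY _ half01).1.
Qed.

Lemma mxpowR_realrow (X U : M) x s : X \is hermsymmx -> U \in unitmx ->
  X = diag_conj U (realrow x) -> mxpowR X s = diag_conj U (realrow (fun j => x j `^ s)).
Proof.
move=> Xh Uu XE; have XP := etrans (esym (hermitian_spectral Xh)) XE.
rewrite mxpowRE (diag_conj_map _ (spectral_unit X) Uu XP).
by congr diag_conj; apply/matrixP => i j; rewrite !mxE.
Qed.

Lemma mxtrace_realrow (U : M) x : U \in unitmx ->
  \tr (diag_conj U (realrow x)) = (\sum_j x j)%:C.
Proof.
by move=> Uu; rewrite mxtrace_diag_conj // rmorph_sum; apply: eq_bigr => j _; rewrite mxE.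
Qed.

End PsdPowers.

Section CommutingPair.
Variables (R : realType) (n : nat) (U X Y : 'M[R[i]]_n) (x y : 'I_n -> R).
Hypotheses (Uu : U \in unitmx) (Xh : X \is hermsymmx) (Yh : Y \is hermsymmx).
Hypotheses (EX : X = diag_conj U (realrow x)) (EY : Y = diag_conj U (realrow y)).

Lemma mxpowR_mul_realrow a :
  mxpowR X a *m mxpowR Y (1 - a) = diag_conj U (realrow (geomean a x y)).
Proof.
rewrite (mxpowR_realrow a Xh Uu EX) (mxpowR_realrow (1 - a) Yh Uu EY).
rewrite diag_conjM; last exact: Uu.
by congr diag_conj; apply/matrixP => i j; rewrite !mxE rmorphM.
Qed.

Lemma tr_mxpowR_mul_realrow a :
  \tr (mxpowR X a *m mxpowR Y (1 - a)) = (renyi_sum a x y)%:C.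
Proof. by rewrite mxpowR_mul_realrow mxtrace_realrow. Qed.

Lemma Re_tr_mxpowR_mul_realrow a :
  complex.Re (\tr (mxpowR X a *m mxpowR Y (1 - a))) = renyi_sum a x y.
Proof. by rewrite tr_mxpowR_mul_realrow. Qed.

Lemma Mt_realrow t : Mt t X Y = diag_conj U (realrow (cMt t x y)).
Proof.
rewrite /Mt tr_mxpowR_mul_realrow mxpowR_mul_realrow scale_diag_conj.
by congr diag_conj; apply/matrixP => i j; rewrite !mxE /cMt -fmorphV -rmorphM.
Qed.

Lemma renyi_sum_gt0_of_tr t : \tr (Mt t X Y) = 1 -> 0 < renyi_sum t x y.
Proof.
rewrite /Mt mxtraceZ tr_mxpowR_mul_realrow lt_def renyi_sum_ge0 andbT => T1.
by apply/eqP => Z0; move: T1; rewrite Z0 rmorph0 mulr0 => /eqP; rewrite eq_sym oner_eq0.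
Qed.

Lemma petz_realrow al : petz al X Y = cpetz al x y.
Proof.
rewrite /petz tr_mxpowR_mul_realrow EX EY diag_conj_submx //.
have -> : [forall j, (realrow x 0 j != 0) ==> (realrow y 0 j != 0)] = supp_sub x y.
  by apply: eq_forallb => j; rewrite !mxE !fmorph_eq0.
by [].
Qed.

End CommutingPair.

Theorem corollary1 (R : realType) (n : nat) (A : 'M[R[i]]_n -> Prop)
    (rho sigma tau omega : 'M[R[i]]_n) (t alpha : R) :
  (forall X, A X -> density X) -> gen_convex A ->
  A rho -> A sigma -> A tau -> A omega -> 0 <= t <= 1 ->
  let RHS : \bar R :=
    (t%:E * petz alpha rho tau + (1 - t)%:E * petz alpha sigma omega
     + (alpha / (1 - alpha) *
          ln (complex.Re (\tr (mxpowR rho t *m mxpowR sigma (1 - t))))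
        + ln (complex.Re (\tr (mxpowR tau t *m mxpowR omega (1 - t)))))%:E)%E in
  let LHS : \bar R := petz alpha (Mt t rho sigma) (Mt t tau omega) in
  (1 < alpha -> (LHS <= RHS)%E) /\ (0 < alpha < 1 -> (RHS <= LHS)%E).
Proof.
move=> densA convA Arho Asigma Atau Aomega t01 RHS LHS.
pose As := [:: rho; sigma; tau; omega].
have AAs X : X \in As -> A X by rewrite /As !inE => /or4P[] /eqP ->.
have herm X : A X -> X \is hermsymmx by move=> /densA [[]].
have [U Uu diagU] := psd_codiag (fun X XAs => (densA X (AAs X XAs)).1)
  (fun X Y XAs YAs => gen_convex_comm densA convA (AAs X XAs) (AAs Y YAs)).
have /diagU [r r0 Er] : rho \in As by rewrite inE eqxx.
have /diagU [s s0 Es] : sigma \in As by rewrite !inE eqxx orbT.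
have /diagU [u u0 Eu] : tau \in As by rewrite !inE eqxx !orbT.
have /diagU [w w0 Ew] : omega \in As by rewrite !inE eqxx !orbT.
have sum1 X x : A X -> X = diag_conj U (realrow x) -> \sum_j x j = 1.
  move=> AX EX; apply: complexI; rewrite rmorph1 -(mxtrace_realrow x Uu) -EX.
  exact: (densA _ AX).2.
have [hr hs] := (herm _ Arho, herm _ Asigma).
have [hu hw] := (herm _ Atau, herm _ Aomega).
have [[[hMrs _] trMrs] _] := convA _ _ Arho Asigma t t01.
have [[[hMuw _] trMuw] _] := convA _ _ Atau Aomega t t01.
have Zrs := renyi_sum_gt0_of_tr Uu hr hs Er Es trMrs.
have Zuw := renyi_sum_gt0_of_tr Uu hu hw Eu Ew trMuw.
have petzMt := petz_realrow Uu hMrs hMuw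
  (Mt_realrow Uu hr hs Er Es t) (Mt_realrow Uu hu hw Eu Ew t).
split => [al1 | /andP[_ al1]]; [move: (cpetz_cMt_le al1 r0 s0 u0 w0
    (sum1 _ _ Arho Er) (sum1 _ _ Asigma Es) t01 Zrs Zuw)
  | move: (cpetz_cMt_ge al1 r0 s0 u0 w0 t01 Zrs Zuw)];
by rewrite -(Re_tr_mxpowR_mul_realrow Uu hr hs Er Es t)
  -(Re_tr_mxpowR_mul_realrow Uu hu hw Eu Ew t) -petzMt
  -(petz_realrow Uu hr hu Er Eu) -(petz_realrow Uu hs hw Es Ew).
Qed.
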